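(* Let $(\mathbb N,S)$ be the natural numbers with the unary successor function $S(n)=n+1$. For all $a,b,c,d\in\mathbb N$, $$(\mathbb N,S)\models_e a:b::c:d\iff a-b=c-d.$$
   Context: Equational fragment: for an $L$-structure $\mathfrak A$ and $a,b\in A$, the set of equational justifications is $\uparrow^e_{\mathfrak A}(a\to b)=\{s(x,y)=t(x,y): s,t\ L\text{-terms in variables among }x,y,\ \text{the formula } s=t \text{ is a c-formula},\ \mathfrak A\models s(a,b)=t(a,b)\}$, where a c-formula is one whose free variables are exactly $x,y$ and whose dependency graph (vertices: its variables; edge between two variables iff they occur in a common atomic subformula) is connected. Put $\uparrow^e_{\mathfrak A}(a\to b:\cdot\, c\to d)=\uparrow^e_{\mathfrak A}(a\to b)\cap\uparrow^e_{\mathfrak A}(c\to d)$. An equation is trivial iff it lies in $\uparrow^e_{\mathfrak A}(a\to b:\cdot\, c\to d)$ for all $a,b,c,d$; $\emptyset^e$ denotes the set of trivial ones. $\mathfrak A\models_e a\to b:\cdot\, c\to d$ iff either $\uparrow^e_{\mathfrak A}(a\to b)\cup\uparrow^e_{\mathfrak A}(c\to d)$ consists only of trivial equations, or $\uparrow^e_{\mathfrak A}(a\to b:\cdot\, c\to d)$ contains a non-trivial equation and for every $d'$, $\emptyset^e\subsetneq\uparrow^e(a\to b:\cdot\, c\to d)\subseteq\uparrow^e(a\to b:\cdot\, c\to d')$ implies $\emptyset^e\subsetneq\uparrow^e(a\to b:\cdot\, c\to d')\subseteq\uparrow^e(a\to b:\cdot\, c\to d)$. $\mathfrak A\models_e a:b::c:d$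 iff $\mathfrak A\models_e a\to b:\cdot\, c\to d$, $b\to a:\cdot\, d\to c$, $c\to d:\cdot\, a\to b$ and $d\to c:\cdot\, b\to a$. Here $a-b$ denotes integer subtraction. *)

From Stdlib Require Import ZArith.

Inductive term : Type :=
| Vx : term
| Vy : term
| Fapp : term -> term.

Definition equation := (term * term)%type.

Fixpoint occurs_x (t : term) : bool :=
  match t with Vx => true | Vy => false | Fapp u => occurs_x u end.
Fixpoint occurs_y (t : term) : bool :=
  match t with Vx => false | Vy => true | Fapp u => occurs_y u end.

(* Dependency graph of the (atomic) formula s = t: its vertices are the
   variables occurring in it; two variables are adjacent iff they occur in a
   common atomic subformula (here the single atom s = t). *)
Definition eq_vars_x (e : equation) : Prop := occurs_x (fst e) = true \/ occurs_x (snd e) = true.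
Definition eq_vars_y (e : equation) : Prop := occurs_y (fst e) = true \/ occurs_y (snd e) = true.

(* The dependency graph of an atomic formula: every pair of its variables is
   adjacent (they occur in the common atom s = t). Connectedness, with vertex
   set {x,y}, hence amounts to: x and y are both vertices and adjacent. *)
Definition dep_edge_xy (e : equation) : Prop := eq_vars_x e /\ eq_vars_y e.

(* c-formula: free variables exactly x, y, and dependency graph connected. *)
Definition c_formula (e : equation) : Prop :=
  (eq_vars_x e /\ eq_vars_y e) /\ dep_edge_xy e.

Section Unary.
Variable A : Type.
Variable f : A -> A.

Fixpoint eval (a b : A) (t : term) : A :=
  match t with Vx => a | Vy => b | Fapp u => f (eval a b u) end.

Definition just (a b : A) (e : equation) : Prop :=
  c_formula e /\ eval a b (fst e) = eval a b (snd e).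

Definition just2 (a b c d : A) (e : equation) : Prop :=
  just a b e /\ just c d e.

Definition trivial_eq (e : equation) : Prop :=
  forall a b c d : A, just2 a b c d e.

Definition subset_eq (P Q : equation -> Prop) : Prop := forall e, P e -> Q e.

Definition nontriv_strict (X : equation -> Prop) : Prop :=
  subset_eq trivial_eq X /\ exists e, X e /\ ~ trivial_eq e.

Definition models_arrow (a b c d : A) : Prop :=
  (forall e, (just a b e \/ just c d e) -> trivial_eq e)
  \/
  ((exists e, just2 a b c d e /\ ~ trivial_eq e) /\
   forall d' : A,
     (nontriv_strict (just2 a b c d) /\ subset_eq (just2 a b c d) (just2 a b c d')) ->
     (nontriv_strict (just2 a b c d') /\ subset_eq (just2 a b c d') (just2 a b c d))).

Definition models_analogy (a b c d : A) : Prop :=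
  models_arrow a b c d /\ models_arrow b a d c /\
  models_arrow c d a b /\ models_arrow d c b a.

End Unary.

Arguments just {A} f a b e.
Arguments just2 {A} f a b c d e.
Arguments trivial_eq {A} f e.
Arguments models_arrow {A} f a b c d.
Arguments models_analogy {A} f a b c d.

(* In (N, S) a term denotes its variable shifted by its depth, and x, y must
   occur on opposite sides of a c-formula, so [S^m x = S^n y] is justified
   by (a, b) exactly when a - b = n - m.  Hence all justifications of a pair
   only depend on a - b, no equation is trivial, and an arrow a -> b :. c -> d
   holds iff a - b = c - d; the four arrows of an analogy then amount to the
   same condition. *)
From Stdlib Require Import ZArith Lia.

Fixpoint depth (t : term) : nat :=
  match t with Vx | Vy => 0 | Fapp u => S (depth u) end.

Fixpoint Fiter (n : nat) (t : term) : term :=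
  match n with 0 => t | S k => Fapp (Fiter k t) end.

Lemma depth_Fiter n t : depth (Fiter n t) = n + depth t.
Proof. induction n; simpl; auto. Qed.

Lemma occurs_x_Fiter n t : occurs_x (Fiter n t) = occurs_x t.
Proof. induction n; simpl; auto. Qed.

Lemma occurs_y_negb t : occurs_y t = negb (occurs_x t).
Proof. induction t; simpl; auto. Qed.

Lemma eval_S a b t : eval nat S a b t = (if occurs_x t then a else b) + depth t.
Proof. induction t; simpl; lia. Qed.

Lemma just_S_iff a b s t : just S a b (s, t) <->
  (occurs_x s = true /\ occurs_x t = false /\ a + depth s = b + depth t) \/
  (occurs_x s = false /\ occurs_x t = true /\ b + depth s = a + depth t).
Proof.
  unfold just, c_formula, dep_edge_xy, eq_vars_x, eq_vars_y; simpl.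
  rewrite !eval_S, !occurs_y_negb.
  destruct (occurs_x s), (occurs_x t); simpl; intuition (try discriminate; lia).
Qed.

Lemma just_S_diff_iff a b c d e : just S a b e ->
  (just S c d e <-> (Z.of_nat a - Z.of_nat b = Z.of_nat c - Z.of_nat d)%Z).
Proof.
  destruct e as [s t]; rewrite !just_S_iff.
  intros Hab; split; intros Hcd; intuition (try congruence; lia).
Qed.

Lemma just_S_Fiter a b : just S a b (Fiter b Vx, Fiter a Vy).
Proof.
  apply just_S_iff; left.
  rewrite !occurs_x_Fiter, !depth_Fiter; simpl; repeat split; lia.
Qed.

Lemma not_trivial_eq_S e : ~ trivial_eq S e.
Proof.
  intros Htriv; destruct (Htriv 0 0 1 0) as [H00 H10].
  apply (just_S_diff_iff _ _ _ _ _ H00) in H10; lia.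
Qed.

Lemma models_arrow_S_iff a b c d : models_arrow S a b c d <->
  (Z.of_nat a - Z.of_nat b = Z.of_nat c - Z.of_nat d)%Z.
Proof.
  pose proof (just_S_Fiter a b) as Hw.
  split.
  - intros [Hempty | [[e [[Hab Hcd] _]] _]].
    + destruct (not_trivial_eq_S _ (Hempty _ (or_introl Hw))).
    + exact (proj1 (just_S_diff_iff _ _ _ _ _ Hab) Hcd).
  - intros Hdiff.
    assert (Hw2 : just2 S a b c d (Fiter b Vx, Fiter a Vy))
      by (split; [exact Hw | apply (just_S_diff_iff _ _ _ _ _ Hw); exact Hdiff]).
    right; split.
    + exists (Fiter b Vx, Fiter a Vy); split; [exact Hw2 | apply not_trivial_eq_S].
    + intros d' [Hstrict Hsub].
      destruct (Hsub _ Hw2) as [_ Hcd'].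
      apply (just_S_diff_iff _ _ _ _ _ Hw) in Hcd'.
      assert (d' = d) by lia; subst d'.
      split; [exact Hstrict | intros e He; exact He].
Qed.

Theorem theorem13 : forall a b c d : nat,
  models_analogy S a b c d <->
  (Z.of_nat a - Z.of_nat b = Z.of_nat c - Z.of_nat d)%Z.
Proof.
  intros a b c d; unfold models_analogy; rewrite !models_arrow_S_iff; lia.
Qed.
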